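(* Fix $N\ge3$ and $\lambda>0$, and let $\underline F(1)$ be defined (as a function of $p\in[0,1)$) by the recursion in the context. Then, as $p\downarrow0$, $$\underline F(1)=F_0(1)-\lambda^{-1}(N-1)\,p+o(p),$$ where $F_0(1)=\sum_{i=1}^{N-1}\frac{1}{\lambda i(N-i)}=\frac{2}{\lambda N}H_{N-1}$ and $H_n=\sum_{k=1}^n 1/k$.
   Context: For $N\ge3$, $\lambda>0$, $p\in[0,1)$: set $\underline F(N)=0$ and, for $i=N-1,\dots,1$, $\underline F(i)=(1-p)^{i(N-i)}\big[\frac{1}{\lambda i(N-i)}+\underline F(i+1)\big]+\sum_{c=1}^{N-i-1}\binom{N-i}{c}[1-(1-p)^i]^c(1-p)^{i(N-i-c)}\underline F(i+c)$. This is the paper's lower bound on the expected flooding time of an $N$-node network with ON/OFF edges (stationary ON probability $p$, exponential OFF periods of mean $\lambda^{-1}$, instantaneous transmission over ON edges). *)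

From Stdlib Require Import Reals Lra Lia List.
Open Scope R_scope.

Definition lsum (l : list nat) (g : nat -> R) : R :=
  fold_right (fun c acc => g c + acc) 0 l.

(* Fuel-driven evaluation of the lower-bound recursion.
   Flow_aux N lam p fuel i computes F_(i) provided fuel >= N - i;
   F_(j) = 0 for j >= N. *)
Fixpoint Flow_aux (N : nat) (lam p : R) (fuel i : nat) {struct fuel} : R :=
  match fuel with
  | O => 0
  | S f =>
      if (N <=? i)%nat then 0 else
      (1 - p) ^ (i * (N - i)) *
        (/ (lam * INR i * INR (N - i)) + Flow_aux N lam p f (i + 1))
      + lsum (seq 1 (N - i - 1))
          (fun c => C (N - i) c * (1 - (1 - p) ^ i) ^ c
                    * (1 - p) ^ (i * (N - i - c))
                    * Flow_aux N lam p f (i + c))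
  end.

Definition Flow (N : nat) (lam p : R) (i : nat) : R :=
  Flow_aux N lam p (N - i) i.

Definition F0_1 (N : nat) (lam : R) : R :=
  lsum (seq 1 (N - 1)) (fun i => / (lam * INR i * INR (N - i))).

From Stdlib Require Import Reals Lra Lia List.
Open Scope R_scope.

(* We show the stronger statement that every value
   \underline F(i), 1 <= i <= N, is a first-order expansion in p uniformly on
   [0,1]:  \underline F(i) = F_0(i) - (N - i) p / lam + O(p^2),  where
   F_0(i) = sum_{j=i}^{N-1} 1/(lam j (N-j)).  It then expands one step of the
   recursion, assuming expansions for the later indices: the "stay" term
   (1-p)^{i(N-i)} [1/(lam i (N-i)) + F(i+1)] contributes to order p, and among
   the "jump" terms only the single jump c = 1 contributes at order p, because
   (1 - (1-p)^i)^c = O(p^c).  The coefficients telescope to -(N-i)/lam, and an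
   induction on the fuel of [Flow_aux] concludes. *)

Definition approx (f : R -> R) (A B : R) : Prop :=
  exists K, 0 <= K /\
    forall p, 0 <= p <= 1 -> Rabs (f p - (A + B * p)) <= K * p ^ 2.

Lemma approx_eqAB f A B A' B' : approx f A B -> A = A' -> B = B' -> approx f A' B'.
Proof. intros H -> ->; exact H. Qed.

Lemma approx_const a : approx (fun _ => a) a 0.
Proof.
  exists 0; split; [lra|]. intros p Hp.
  replace (a - (a + 0 * p)) with 0 by ring. rewrite Rabs_R0. lra.
Qed.

Lemma approx_id : approx (fun p => p) 0 1.
Proof.
  exists 0; split; [lra|]. intros p Hp.
  replace (p - (0 + 1 * p)) with 0 by ring. rewrite Rabs_R0. lra.
Qed.

Lemma approx_plus f g A B C D : approx f A B -> approx g C D ->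
  approx (fun p => f p + g p) (A + C) (B + D).
Proof.
  intros [K1 [HK1 H1]] [K2 [HK2 H2]]. exists (K1 + K2); split; [lra|].
  intros p Hp. specialize (H1 p Hp). specialize (H2 p Hp).
  replace (f p + g p - (A + C + (B + D) * p)) with
    ((f p - (A + B * p)) + (g p - (C + D * p))) by ring.
  eapply Rle_trans; [apply Rabs_triang|]. lra.
Qed.

Lemma approx_sub f g A B C D : approx f A B -> approx g C D ->
  approx (fun p => f p - g p) (A - C) (B - D).
Proof.
  intros [K1 [HK1 H1]] [K2 [HK2 H2]]. exists (K1 + K2); split; [lra|].
  intros p Hp. specialize (H1 p Hp). specialize (H2 p Hp).
  replace (f p - g p - (A - C + (B - D) * p)) with
    ((f p - (A + B * p)) + - (g p - (C + D * p))) by ring.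
  eapply Rle_trans; [apply Rabs_triang|]. rewrite Rabs_Ropp. lra.
Qed.

Lemma linear_bound A B p : 0 <= p <= 1 -> Rabs (A + B * p) <= Rabs A + Rabs B.
Proof.
  intros Hp. eapply Rle_trans; [apply Rabs_triang|].
  rewrite Rabs_mult, (Rabs_right p) by lra. pose proof (Rabs_pos B). nra.
Qed.

Lemma approx_bounded f A B : approx f A B ->
  exists M, 0 <= M /\ forall p, 0 <= p <= 1 -> Rabs (f p) <= M.
Proof.
  intros [K [HK H]]. exists (Rabs A + Rabs B + K). split.
  { pose proof (Rabs_pos A). pose proof (Rabs_pos B). lra. }
  intros p Hp. specialize (H p Hp). pose proof (linear_bound A B p Hp).
  replace (f p) with ((A + B * p) + (f p - (A + B * p))) by ring.
  assert (Hp2 : p ^ 2 <= 1) by nra.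
  eapply Rle_trans; [apply Rabs_triang|]. nra.
Qed.

(* Product rule: the p^2-term B D p^2 and the cross errors are all O(p^2). *)
Lemma approx_mult f g A B C D : approx f A B -> approx g C D ->
  approx (fun p => f p * g p) (A * C) (A * D + B * C).
Proof.
  intros Hf Hg.
  destruct (approx_bounded _ _ _ Hf) as [M [HM Hbound]].
  destruct Hf as [K1 [HK1 H1]], Hg as [K2 [HK2 H2]].
  pose proof (Rabs_pos B). pose proof (Rabs_pos C). pose proof (Rabs_pos D).
  exists (M * K2 + K1 * (Rabs C + Rabs D) + Rabs B * Rabs D). split; [nra|].
  intros p Hp.
  specialize (H1 p Hp). specialize (H2 p Hp). specialize (Hbound p Hp).
  pose proof (linear_bound C D p Hp).
  assert (Hp2 : 0 <= p ^ 2) by nra.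
  set (e1 := f p - (A + B * p)) in *. set (e2 := g p - (C + D * p)) in *.
  replace (f p * g p - (A * C + (A * D + B * C) * p)) with
    (f p * e2 + e1 * (C + D * p) + B * D * p ^ 2) by (unfold e1, e2; ring).
  assert (T1 : Rabs (f p * e2) <= M * (K2 * p ^ 2)).
  { rewrite Rabs_mult. apply Rmult_le_compat; auto using Rabs_pos. }
  assert (T2 : Rabs (e1 * (C + D * p)) <= K1 * p ^ 2 * (Rabs C + Rabs D)).
  { rewrite Rabs_mult. apply Rmult_le_compat; auto using Rabs_pos. }
  assert (T3 : Rabs (B * D * p ^ 2) = Rabs B * Rabs D * p ^ 2).
  { rewrite !Rabs_mult, (Rabs_right (p ^ 2)) by lra. reflexivity. }
  eapply Rle_trans; [apply Rabs_triang|].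
  eapply Rle_trans; [apply Rplus_le_compat_r, Rabs_triang|].
  lra.
Qed.

Lemma approx_pow f A B n : approx f A B ->
  approx (fun p => f p ^ n) (A ^ n) (INR n * A ^ (n - 1) * B).
Proof.
  intros H. induction n as [|n IH].
  - simpl. eapply approx_eqAB; [apply approx_const| |]; simpl; ring.
  - simpl pow.
    eapply approx_eqAB; [apply (approx_mult _ _ _ _ _ _ H IH) | reflexivity |].
    destruct n as [|m]; [simpl; ring|].
    replace (S (S m) - 1)%nat with (S m) by lia.
    replace (S m - 1)%nat with m by lia.
    simpl pow. rewrite !S_INR. ring.
Qed.

Lemma approx_lsum l (g : R -> nat -> R) (A B : nat -> R) :
  (forall c, In c l -> approx (fun p => g p c) (A c) (B c)) ->
  approx (fun p => lsum l (g p)) (lsum l A) (lsum l B).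
Proof.
  induction l as [|x l IH]; intros H; simpl.
  - apply approx_const.
  - apply approx_plus.
    + apply H; simpl; auto.
    + apply IH; intros c Hc; apply H; simpl; auto.
Qed.

Lemma approx_survival k : approx (fun p => (1 - p) ^ k) 1 (- INR k).
Proof.
  assert (Y : approx (fun p => 1 - p) 1 (-1)).
  { eapply approx_eqAB; [apply (approx_sub _ _ _ _ _ _ (approx_const 1) approx_id)|ring|ring]. }
  eapply approx_eqAB; [apply (approx_pow _ _ _ k Y)|apply pow1|rewrite pow1; ring].
Qed.

Lemma approx_hit i : approx (fun p => 1 - (1 - p) ^ i) 0 (INR i).
Proof.
  eapply approx_eqAB;
    [apply (approx_sub _ _ _ _ _ _ (approx_const 1) (approx_survival i))|ring|ring].
Qed.

Lemma lsum_zero l g : (forall c, In c l -> g c = 0) -> lsum l g = 0.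
Proof.
  induction l as [|x l IH]; intros H; simpl; [reflexivity|].
  rewrite H by (simpl; auto).
  rewrite IH by (intros; apply H; simpl; auto). ring.
Qed.

Lemma C_n_1 n : (1 <= n)%nat -> C n 1 = INR n.
Proof.
  intros Hn. unfold C. destruct n as [|m]; [lia|].
  replace (S m - 1)%nat with m by lia. rewrite fact_simpl, mult_INR.
  assert (INR (Factorial.fact m) <> 0) by (apply not_0_INR, Factorial.fact_neq_0).
  replace (INR (Factorial.fact 1)) with 1 by reflexivity. field; auto.
Qed.

Definition F0 (N : nat) (lam : R) (i : nat) : R :=
  lsum (seq i (N - i)) (fun j => / (lam * INR j * INR (N - j))).

Lemma F0_step N lam i : (i < N)%nat ->
  F0 N lam i = / (lam * INR i * INR (N - i)) + F0 N lam (i + 1).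
Proof.
  intros Hi. unfold F0.
  assert (Hseq : seq i (N - i) = i :: seq (S i) (N - S i)).
  { replace (N - i)%nat with (S (N - S i)) by lia. reflexivity. }
  rewrite Hseq, Nat.add_1_r. reflexivity.
Qed.

Definition F_expansion (N : nat) (lam : R) (G : R -> R) (i : nat) : Prop :=
  approx G (F0 N lam i) (- INR (N - i) / lam).

Section OneStep.

Variables (N i : nat) (lam : R) (G : R -> nat -> R).
Hypotheses (Hlam : 0 < lam) (Hi : (1 <= i)%nat) (HiN : (i < N)%nat).

Hypothesis HG : forall j, (i < j <= N)%nat -> F_expansion N lam (fun p => G p j) j.

Lemma stay_term_approx :
  approx (fun p => (1 - p) ^ (i * (N - i)) * (/ (lam * INR i * INR (N - i)) + G p (i + 1)))
    (F0 N lam i)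
    (- INR (i * (N - i)) * F0 N lam i - INR (N - (i + 1)) / lam).
Proof.
  eapply approx_eqAB.
  - apply approx_mult; [apply approx_survival|].
    apply approx_plus; [apply approx_const|apply HG; lia].
  - rewrite (F0_step N lam i HiN). ring.
  - rewrite (F0_step N lam i HiN). unfold Rdiv. ring.
Qed.

(* Linear coefficient of the jump sum: only c = 1 survives, since 0^(c-1) = 0. *)
Lemma jump_linear_coeff :
  lsum (seq 1 (N - i - 1))
    (fun c => C (N - i) c * (INR c * 0 ^ (c - 1) * INR i) * F0 N lam (i + c))
  = INR (N - i) * INR i * F0 N lam (i + 1).
Proof.
  destruct (N - i - 1)%nat as [|m] eqn:Em.
  - unfold F0. simpl. replace (N - (i + 1))%nat with 0%nat by lia. simpl. ring.
  - simpl seq. simpl lsum. rewrite lsum_zero.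
    + rewrite C_n_1 by lia. simpl. ring.
    + intros c Hc. apply in_seq in Hc. rewrite pow_i by lia. ring.
Qed.

(* The jump terms: c >= 1 uninformed nodes see an ON edge and are informed at
   once; the whole sum vanishes at p = 0 and its slope is the c = 1 term. *)
Lemma jump_sum_approx :
  approx (fun p => lsum (seq 1 (N - i - 1))
            (fun c => C (N - i) c * (1 - (1 - p) ^ i) ^ c
                      * (1 - p) ^ (i * (N - i - c)) * G p (i + c)))
    0 (INR (N - i) * INR i * F0 N lam (i + 1)).
Proof.
  eapply approx_eqAB; [|apply lsum_zero; reflexivity|apply jump_linear_coeff].
  apply approx_lsum. intros c Hc. apply in_seq in Hc.
  eapply approx_eqAB.
  - apply approx_mult; [apply approx_mult; [apply approx_mult|]|].
    + apply approx_const.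
    + apply (approx_pow _ _ _ c (approx_hit i)).
    + apply approx_survival.
    + apply HG; lia.
  - rewrite pow_i by lia. ring.
  - rewrite pow_i by lia. ring.
Qed.

(* One step of the recursion preserves the expansion: the order-p
   coefficients telescope to -(N-i)/lam. *)
Lemma recursion_step_approx :
  F_expansion N lam
    (fun p => (1 - p) ^ (i * (N - i)) * (/ (lam * INR i * INR (N - i)) + G p (i + 1))
       + lsum (seq 1 (N - i - 1))
           (fun c => C (N - i) c * (1 - (1 - p) ^ i) ^ c
                     * (1 - p) ^ (i * (N - i - c)) * G p (i + c))) i.
Proof.
  unfold F_expansion. eapply approx_eqAB;
    [apply (approx_plus _ _ _ _ _ _ stay_term_approx jump_sum_approx)|ring|].
  assert (Hi0 : INR i <> 0) by (apply not_0_INR; lia).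
  assert (HNi : INR (N - i) <> 0) by (apply not_0_INR; lia).
  rewrite (F0_step N lam i HiN), mult_INR.
  replace (INR (N - (i + 1))) with (INR (N - i) - 1)
    by (replace (N - (i + 1))%nat with (N - i - 1)%nat by lia;
        rewrite (minus_INR (N - i) 1) by lia; reflexivity).
  field. lra.
Qed.

End OneStep.

Lemma Flow_aux_expansion N lam : 0 < lam ->
  forall fuel i, (1 <= i)%nat -> (N - i <= fuel)%nat ->
  F_expansion N lam (fun p => Flow_aux N lam p fuel i) i.
Proof.
  intros Hlam fuel. unfold F_expansion.
  induction fuel as [|f IH]; intros i Hi Hf.
  - unfold F0. replace (N - i)%nat with 0%nat by lia. simpl.
    eapply approx_eqAB; [apply approx_const|reflexivity|field; lra].
  - cbn [Flow_aux]. destruct (N <=? i)%nat eqn:E.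
    + apply Nat.leb_le in E. unfold F0. replace (N - i)%nat with 0%nat by lia. simpl.
      eapply approx_eqAB; [apply approx_const|reflexivity|field; lra].
    + apply Nat.leb_gt in E.
      apply (recursion_step_approx N i lam (fun p j => Flow_aux N lam p f j)); auto.
      intros j Hj. apply IH; lia.
Qed.

Lemma approx_little_o f A B : approx f A B ->
  forall eps, 0 < eps -> exists delta, 0 < delta /\
    forall p, 0 < p -> p < 1 -> p < delta -> Rabs (f p - (A + B * p)) <= eps * p.
Proof.
  intros [K [HK H]] eps Heps. exists (eps / (K + 1)). split.
  { apply Rdiv_lt_0_compat; lra. }
  intros p Hp0 Hp1 Hd. specialize (H p ltac:(lra)).
  assert (Hd' : p * (K + 1) < eps).
  { apply Rmult_lt_compat_r with (r := K + 1) in Hd; [|lra].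
    unfold Rdiv in Hd. rewrite Rmult_assoc, Rinv_l in Hd by lra. lra. }
  nra.
Qed.

Theorem lemma2 (N : nat) (lam : R) :
  (3 <= N)%nat -> 0 < lam ->
  forall eps : R, 0 < eps ->
  exists delta : R, 0 < delta /\
    forall p : R, 0 < p -> p < 1 -> p < delta ->
      Rabs (Flow N lam p 1 - (F0_1 N lam - / lam * INR (N - 1) * p)) <= eps * p.
Proof.
  intros HN Hlam eps Heps.
  pose proof (Flow_aux_expansion N lam Hlam (N - 1) 1 ltac:(lia) ltac:(lia)) as Hexp.
  destruct (approx_little_o _ _ _ Hexp eps Heps) as [delta [Hdelta Hsmall]].
  exists delta. split; [exact Hdelta|]. intros p Hp0 Hp1 Hpd.
  replace (F0_1 N lam - / lam * INR (N - 1) * p)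
    with (F0 N lam 1 + - INR (N - 1) / lam * p) by (unfold F0, F0_1; field; lra).
  exact (Hsmall p Hp0 Hp1 Hpd).
Qed.
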